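(* Let $\mathbf{A}\in\mathbb{R}^{(\ell m)\times(qn)}$ be a block matrix with $\ell\times q$ blocks of size $m\times n$, and let $\mathbf{B}=\mathbf{S}_{\ell,m}\mathbf{A}\mathbf{S}_{q,n}^\top$, viewed as an $m\times n$ grid of blocks of size $\ell\times q$. Let $\mathbf{A}_1,\dots,\mathbf{A}_p$ be the distinct nonzero blocks of $\mathbf{A}$, with $\eta_k$ the number of block positions of $\mathbf{A}$ at which $\mathbf{A}_k$ occurs, and $\mathbf{B}_1,\dots,\mathbf{B}_\rho$ the distinct nonzero blocks of $\mathbf{B}$, with $\xi_\kappa$ the number of block positions of $\mathbf{B}$ at which $\mathbf{B}_\kappa$ occurs. Let $C_k=\{(i,j)\in[m]\times[n]:[\mathbf{A}_k]_{ij}\neq0\}$ and $D_\kappa=\{(i,j)\in[\ell]\times[q]:[\mathbf{B}_\kappa]_{ij}\neq0\}$. Then $$\mathrm{card}\Bigl(\bigcup_{k=1}^p C_k\Bigr)=\sum_{\kappa=1}^\rho\xi_\kappa,\qquad \mathrm{card}\Bigl(\bigcup_{\kappa=1}^\rho D_\kappa\Bigr)=\sum_{k=1}^p\eta_k.$$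
   Context: Blocks of $\mathbf{A}$: $\mathbf{A}^{(\gamma,\delta)}_{\alpha\beta}=\mathbf{A}_{(\gamma-1)m+\alpha,(\delta-1)n+\beta}$ for $(\gamma,\delta)\in[\ell]\times[q]$, $(\alpha,\beta)\in[m]\times[n]$. Blocks of $\mathbf{B}$: $\mathbf{B}^{(\alpha,\beta)}_{\gamma\delta}=\mathbf{B}_{(\alpha-1)\ell+\gamma,(\beta-1)q+\delta}$. For $a,b\ge1$, $s=ab$, the shuffle permutation matrix $\mathbf{S}_{a,b}\in\mathbb{R}^{s\times s}$ has row $(i-1)a+j$ equal to $\mathbf{e}_{(j-1)b+i}^\top$ ($i\in[b]$, $j\in[a]$). ''Distinct blocks'' means the set of distinct nonzero matrices occurring among the blocks; zero blocks are not counted. *)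

From HB Require Import structures.
From mathcomp Require Import all_boot all_order all_algebra.
From mathcomp Require Import reals.
From mathcomp Require Import zify.
Set Implicit Arguments. Unset Strict Implicit. Unset Printing Implicit Defensive.
Import GRing.Theory.

(* All indices are 0-based: the paper's index (γ-1)m+α with γ∈[ℓ], α∈[m]
   becomes g*m+a with g<ℓ, a<m. *)

Lemma idx_lt (l m : nat) (g : 'I_l) (a : 'I_m) : g * m + a < l * m.
Proof.
have hg := ltn_ord g; have ha := ltn_ord a.
have : g.+1 * m <= l * m by rewrite leq_mul2r hg orbT.
rewrite mulSn; lia.
Qed.

Lemma idxT_lt (l m : nat) (a : 'I_m) (g : 'I_l) : a * l + g < l * m.
Proof.
have hg := ltn_ord g; have ha := ltn_ord a.
have : a.+1 * l <= m * l by rewrite leq_mul2r ha orbT.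
rewrite mulSn (mulnC l m); lia.
Qed.

Definition idxA (l m : nat) (g : 'I_l) (a : 'I_m) : 'I_(l * m) :=
  Ordinal (idx_lt g a).
Definition idxB (l m : nat) (a : 'I_m) (g : 'I_l) : 'I_(l * m) :=
  Ordinal (idxT_lt a g).

Section Blocks.
Variable R : realType.

(* Shuffle permutation matrix S_{a,b}: row i*a+j (i<b, j<a) is e_{j*b+i}^T.
   Since j = r %% a and i = r %/ a for r = i*a+j, entry (r,c) is 1 iff
   c = (r %% a) * b + r %/ a. *)
Definition shuffle (a b : nat) : 'M[R]_(a * b) :=
  \matrix_(r, c) (((c : nat) == (r %% a) * b + r %/ a)%N%:R)%R.

Definition blockA (l m q n : nat) (A : 'M[R]_(l * m, q * n)) (g : 'I_l) (d : 'I_q)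
  : 'M[R]_(m, n) := \matrix_(a, b) A (idxA g a) (idxA d b).

Definition blockB (l m q n : nat) (B : 'M[R]_(l * m, q * n)) (a : 'I_m) (b : 'I_n)
  : 'M[R]_(l, q) := \matrix_(g, d) B (idxB a g) (idxB b d).

Definition distinct_blocksA l m q n (A : 'M[R]_(l * m, q * n)) : seq 'M[R]_(m, n) :=
  undup [seq blockA A p.1 p.2 | p <- enum [set: 'I_l * 'I_q] & blockA A p.1 p.2 != 0%R].
Definition distinct_blocksB l m q n (B : 'M[R]_(l * m, q * n)) : seq 'M[R]_(l, q) :=
  undup [seq blockB B p.1 p.2 | p <- enum [set: 'I_m * 'I_n] & blockB B p.1 p.2 != 0%R].

Definition etaA l m q n (A : 'M[R]_(l * m, q * n)) (M : 'M[R]_(m, n)) : nat :=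
  #|[set p : 'I_l * 'I_q | blockA A p.1 p.2 == M]|.
Definition xiB l m q n (B : 'M[R]_(l * m, q * n)) (M : 'M[R]_(l, q)) : nat :=
  #|[set p : 'I_m * 'I_n | blockB B p.1 p.2 == M]|.

Definition supp r c (M : 'M[R]_(r, c)) : {set 'I_r * 'I_c} :=
  [set p | M p.1 p.2 != 0%R].

End Blocks.

(* Entry (g, d) of the block B^(a, b) is entry (a, b) of the block A^(g, d):
   conjugating by shuffle matrices swaps the roles of block position and
   position inside a block.  Hence a position (i, j) lies in the support of
   some distinct nonzero block of A iff the block of B at position (i, j) is
   nonzero, and counting the block positions of B grouped by their (distinct)
   value counts exactly those positions. *)
From HB Require Import structures.
From mathcomp Require Import all_boot all_order all_algebra.
From mathcomp Require Import reals.
Import GRing.Theory.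

Local Open Scope ring_scope.

Lemma sum_card_fibers_undup (T : finType) (V : eqType) (f : T -> V) (P : pred V) :
  \sum_(v <- undup [seq f t | t <- enum [set: T] & P (f t)]) #|[set t | f t == v]|
    = #|[set t | P (f t)]|.
Proof.
set s := undup _.
have s_uniq : uniq s by apply: undup_uniq.
have mem_s t : (f t \in s) = P (f t).
  rewrite mem_undup; apply/mapP/idP => [[t' + ->]|Pft].
    by rewrite mem_filter => /andP[].
  by exists t; rewrite // mem_filter Pft mem_enum inE.
have card_setE (A : pred T) : #|[set t | A t]| = \sum_t (A t : nat).
  by rewrite -sum1_card big_mkcond; apply: eq_bigr => t _; rewrite inE.
under eq_bigr => v _ do rewrite card_setE.
rewrite exchange_big card_setE /=; apply: eq_bigr => t _.
rewrite -mem_s -(count_uniq_mem _ s_uniq) -sum1_count [RHS]big_mkcond /=.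
by apply: eq_bigr => v _; rewrite eq_sym.
Qed.

Lemma mem_bigcup_seq (T : finType) (I : Type) (s : seq I) (F : I -> {set T}) x :
  (x \in \bigcup_(i <- s) F i) = has (fun i => x \in F i) s.
Proof.
by rewrite (big_morph (fun A : {set T} => x \in A) (in_setU x) (in_set0 x)) big_has.
Qed.

Section Supports.
Variable R : realType.

Lemma mem_bigcup_supp_nonzero (T : finType) r c (F : T -> 'M[R]_(r, c)) x :
  (x \in \bigcup_(M <- undup [seq F t | t <- enum [set: T] & F t != 0]) supp M)
    = [exists t, F t x.1 x.2 != 0].
Proof.
rewrite mem_bigcup_seq; apply/hasP/existsP => [[M]|[t Ftx]].
  by rewrite mem_undup => /mapP[t _ ->]; rewrite inE; exists t.
exists (F t); last by rewrite inE.
rewrite mem_undup map_f // mem_filter mem_enum inE andbT.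
by apply: contraNneq Ftx => ->; rewrite mxE.
Qed.

Lemma mx_neq0_exists r c (M : 'M[R]_(r, c)) :
  (M != 0) = [exists x : 'I_r * 'I_c, M x.1 x.2 != 0].
Proof.
apply/matrix0Pn/existsP => [[i [j Mij]]|[[i j] Mij]]; first by exists (i, j).
by exists i, j.
Qed.

Lemma card_union_supp_transposed_blocks r1 c1 r2 c2
    (F : 'I_r2 * 'I_c2 -> 'M[R]_(r1, c1)) (G : 'I_r1 * 'I_c1 -> 'M[R]_(r2, c2)) :
    (forall x y, G x y.1 y.2 = F y x.1 x.2) ->
  #|\bigcup_(M <- undup [seq F y | y <- enum [set: _] & F y != 0]) supp M|
    = \sum_(N <- undup [seq G x | x <- enum [set: _] & G x != 0])
        #|[set x | G x == N]|.
Proof.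
move=> GF; rewrite (@sum_card_fibers_undup _ _ G (predC1 0)); apply: eq_card => x.
rewrite mem_bigcup_supp_nonzero inE /= mx_neq0_exists.
by apply: eq_existsb => y; rewrite GF.
Qed.

End Supports.

Section Shuffle.
Variable R : realType.

Lemma row_shuffle (a b : nat) (x : 'I_b) (y : 'I_a) :
  row (idxB x y) (shuffle R a b) = delta_mx 0 (idxA y x).
Proof.
have a_gt0 : (0 < a)%N by apply: leq_ltn_trans (ltn_ord y).
apply/rowP => c; rewrite !mxE /= modnMDl divnMDl // modn_small // divn_small //.
by rewrite addn0.
Qed.

Lemma row_shuffle_mul (a b p : nat) (M : 'M[R]_(a * b, p)) (x : 'I_b) (y : 'I_a) :
  row (idxB x y) (shuffle R a b *m M) = row (idxA y x) M.
Proof. by rewrite row_mul row_shuffle -rowE. Qed.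

Lemma col_mul_tr_shuffle (a b p : nat) (M : 'M[R]_(p, a * b)) (x : 'I_b) (y : 'I_a) :
  col (idxB x y) (M *m (shuffle R a b)^T) = col (idxA y x) M.
Proof. by apply: trmx_inj; rewrite !tr_col trmx_mul trmxK row_shuffle_mul. Qed.

Lemma blockB_shuffle l m q n (A : 'M[R]_(l * m, q * n)) a b g d :
  blockB (shuffle R l m *m A *m (shuffle R q n)^T) a b g d = blockA A g d a b.
Proof.
have -> : blockB (shuffle R l m *m A *m (shuffle R q n)^T) a b g d
    = col (idxB b d) (shuffle R l m *m A *m (shuffle R q n)^T) (idxB a g) 0.
  by rewrite [LHS]mxE [RHS]mxE.
rewrite col_mul_tr_shuffle mxE.
have -> : (shuffle R l m *m A) (idxB a g) (idxA d b)
    = row (idxB a g) (shuffle R l m *m A) 0 (idxA d b) by rewrite [RHS]mxE.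
by rewrite row_shuffle_mul !mxE.
Qed.

End Shuffle.

Theorem theorem4 (R : realType) (l m q n : nat) (A : 'M[R]_(l * m, q * n)) :
  let B := (shuffle R l m *m A *m (shuffle R q n)^T)%R in
  #|\bigcup_(Ak <- distinct_blocksA A) supp Ak|
    = \sum_(Bk <- distinct_blocksB B) xiB B Bk
  /\
  #|\bigcup_(Bk <- distinct_blocksB B) supp Bk|
    = \sum_(Ak <- distinct_blocksA A) etaA A Ak.
Proof.
move=> B.
have blockAB x y : blockB B x.1 x.2 y.1 y.2 = blockA A y.1 y.2 x.1 x.2.
  exact: blockB_shuffle.
split.
- exact: (@card_union_supp_transposed_blocks R _ _ _ _
            (fun y => blockA A y.1 y.2) (fun x => blockB B x.1 x.2) blockAB).
- exact: (@card_union_supp_transposed_blocks R _ _ _ _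
            (fun x => blockB B x.1 x.2) (fun y => blockA A y.1 y.2)
            (fun y x => esym (blockAB x y))).
Qed.
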